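(* Let $\mathbf t:\mathcal D\to\mathcal T$ be a refinement system, $c:A\to B$ in $\mathcal T$, and $P\sqsubset A$. If the pushforward $c_!P$ exists in $\mathbf t$, then there are natural isomorphisms of presheaves on $B^{+}$: (a) $(c_!P)^{+}\cong{}^{\perp_B}\big((c^{-})^*P^{-}\big)$; (b) $(c_!P)^{+}\cong{}^{\perp_B}\Big(\big((c^{+})_!P^{+}\big)^{\perp_B}\Big)$.
   Context: A refinement system is a functor $\mathbf{t}:\mathcal{D}\to\mathcal{T}$; composition is diagrammatic. Write $P\sqsubset A$ if $\mathbf t(P)=A$; a derivation of $P\Rightarrow_cQ$ is a morphism $\alpha:P\to Q$ with $\mathbf t(\alpha)=c$. A pushforward of $P\sqsubset A$ along $c:A\to B$ is $c_!P\sqsubset B$ with a derivation $\kappa$ of $P\Rightarrow_cc_!P$ such that pre-composition with $\kappa$ is a bijection from derivations of $c_!P\Rightarrow_dQ$ to derivations of $P\Rightarrow_{c;d}Q$ for all $Q\sqsubset Y$, $d:B\to Y$. For $B\in\mathcal T$: $B^{+}$ has objects $(P,c)$, $P\sqsubset X$, $c:X\to B$, morphisms $(P_1,c_1)\to(P_2,c_2)$ the derivations of $P_1\Rightarrow_eP_2$ with $c_1=e;c_2$; $B^{-}$ is the opposite of the category with objects $(d,R)$, $d:B\to Y$, $R\sqsubset Y$, morphisms $(d_1,R_1)\to(d_2,R_2)$ the derivations of $R_1\Rightarrow_eR_2$ with $d_1;e=d_2$. For $Q\sqsubset B$: $Q^{+}:(B^{+})^{op}\to\mathbf{Set}$, $(P,c)\mapsto$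 derivations of $P\Rightarrow_cQ$ (acting by precomposition), and $Q^{-}:(B^{-})^{op}\to\mathbf{Set}$, $(d,R)\mapsto$ derivations of $Q\Rightarrow_dR$ (acting by postcomposition). For $c:A\to B$: $c^{+}:A^{+}\to B^{+}$, $(P,e)\mapsto(P,e;c)$; $c^{-}:B^{-}\to A^{-}$, $(d,R)\mapsto(c;d,R)$. $\mathrm{Jdg}(\mathbf t)$ has objects $(P,c,R)$ and morphisms $(P_1,c_1,R_1)\to(P_2,c_2,R_2)$ pairs of derivations $\beta$ of $P_1\Rightarrow_eP_2$, $\gamma$ of $R_2\Rightarrow_{e'}R_1$ with $c_1=e;c_2;e'$; $\mathrm{Der}$ sends $(P,c,R)$ to the set of derivations of $P\Rightarrow_cR$ and $(\beta,\gamma)$ to $\alpha\mapsto\beta;\alpha;\gamma$. Bracket $\langle-\mid-\rangle_B:B^{+}\times B^{-}\to\mathrm{Jdg}(\mathbf t)$: $((P,c),(d,R))\mapsto(P,c;d,R)$. Duals: for $\phi$ on $B^{+}$, $\phi^{\perp_B}(y)=$ natural transformations $\phi\Rightarrow\mathrm{Der}(\langle-\mid y\rangle_B)$ (presheaf on $B^{-}$); for $\psi$ on $B^{-}$, ${}^{\perp_B}\psi(x)=$ natural transformations $\psi\Rightarrow\mathrm{Der}(\langle x\mid-\rangle_B)$ (presheaf on $B^{+}$). For a functor $F:\mathcal X\to\mathcal Y$: $F^*\psi=\psi\circ F^{op}$ and $F_!\chi(y)=\int^{x}\mathcal Y(y,Fx)\times\chi(x)$. *)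

(* a small self-contained category-theory layer, enough to state
   Proposition 4.13 on refinement systems.  Composition is DIAGRAMMATIC:
   [comp f g] is "f ; g" (first f, then g). *)
From Stdlib Require Import ProofIrrelevance FunctionalExtensionality
  PropExtensionality Relations.Relation_Operators.

Set Implicit Arguments.
Unset Strict Implicit.
Unset Printing Implicit Defensive.

Record Category := {
  ob :> Type;
  hom : ob -> ob -> Type;
  idm : forall x, hom x x;
  comp : forall x y z, hom x y -> hom y z -> hom x z;
  comp_idl : forall x y (f : hom x y), comp (idm x) f = f;
  comp_idr : forall x y (f : hom x y), comp f (idm y) = f;
  comp_assoc : forall x y z w (f : hom x y) (g : hom y z) (h : hom z w),
      comp (comp f g) h = comp f (comp g h)
}.
Arguments hom {_} _ _.
Arguments idm {_} _.
Arguments comp {_ _ _ _} _ _.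

Definition op (C : Category) : Category.
refine {| ob := ob C; hom x y := @hom C y x; idm x := @idm C x;
          comp x y z f g := @comp C _ _ _ g f |}.
- intros; apply comp_idr.
- intros; apply comp_idl.
- intros; symmetry; apply comp_assoc.
Defined.

Record Functor (C E : Category) := {
  fobj :> C -> E;
  fmap : forall x y, hom x y -> hom (fobj x) (fobj y);
  fmap_id : forall x, fmap (idm x) = idm (fobj x);
  fmap_comp : forall x y z (f : hom x y) (g : hom y z),
      fmap (comp f g) = comp (fmap f) (fmap g)
}.
Arguments fmap {_ _} _ {_ _} _.

Definition fop (C E : Category) (F : Functor C E) : Functor (op C) (op E).
refine (@Build_Functor (op C) (op E) (fun x => F x)
          (fun x y (f : @hom (op C) x y) => @fmap C E F y x f) _ _).
- intros; simpl; apply fmap_id.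
- intros; simpl; apply fmap_comp.
Defined.

Record Presheaf (C : Category) := {
  ps :> C -> Type;
  psmap : forall x y, hom x y -> ps y -> ps x;
  psmap_id : forall x a, psmap (idm x) a = a;
  psmap_comp : forall x y z (f : hom x y) (g : hom y z) a,
      psmap (comp f g) a = psmap f (psmap g a)
}.
Arguments psmap {_} _ {_ _} _ _.

Record NatTrans (C : Category) (F G : Presheaf C) := {
  nt :> forall x, F x -> G x;
  nt_nat : forall (x y : C) (f : hom x y) (a : F y), nt (psmap F f a) = psmap G f (nt a)
}.
Arguments nt {C F G} _ _ _.
Arguments nt_nat {C F G} _ _ _ _ _.

Record NatIso (C : Category) (F G : Presheaf C) := {
  iso_fw : NatTrans F G;
  iso_bw : NatTrans G F;
  iso_bw_fw : forall x a, iso_bw x (iso_fw x a) = a;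
  iso_fw_bw : forall x b, iso_fw x (iso_bw x b) = b
}.

Lemma sig_ext (A : Type) (P : A -> Prop) (u v : {a : A | P a}) :
  proj1_sig u = proj1_sig v -> u = v.
Proof. destruct u, v; simpl; intros ->; f_equal; apply proof_irrelevance. Qed.

Lemma nt_ext (C : Category) (F G : Presheaf C) (m n : NatTrans F G) :
  (forall x a, m x a = n x a) -> m = n.
Proof.
  destruct m as [m Hm], n as [n Hn]; simpl; intro H.
  assert (m = n) as E.
  { apply functional_extensionality_dep; intro x;
    apply functional_extensionality; apply H. }
  subst; f_equal; apply proof_irrelevance.
Qed.

Definition bijective (A B : Type) (f : A -> B) : Prop :=
  exists g : B -> A, (forall a, g (f a) = a) /\ (forall b, f (g b) = b).

Definition quot (X : Type) (R : X -> X -> Prop) : Type :=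
  {S : X -> Prop | exists x, S = clos_refl_sym_trans X R x}.

Lemma clos_map (X Y : Type) (R : X -> X -> Prop) (R' : Y -> Y -> Prop)
  (f : X -> Y) (Hf : forall a b, R a b -> clos_refl_sym_trans Y R' (f a) (f b))
  a b : clos_refl_sym_trans X R a b -> clos_refl_sym_trans Y R' (f a) (f b).
Proof.
  induction 1.
  - apply Hf; assumption.
  - apply rst_refl.
  - apply rst_sym; assumption.
  - eapply rst_trans; eassumption.
Qed.

Section QMap.
Variables (X Y : Type) (R : X -> X -> Prop) (R' : Y -> Y -> Prop) (f : X -> Y)
  (Hf : forall a b, R a b -> clos_refl_sym_trans Y R' (f a) (f b)).

Lemma qmap_ok (S : quot R) :
  exists y0, (fun y => exists x, proj1_sig S x /\ clos_refl_sym_trans Y R' (f x) y)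
             = clos_refl_sym_trans Y R' y0.
Proof.
  destruct S as [S [x0 ->]]; exists (f x0); simpl.
  apply functional_extensionality; intro y; apply propositional_extensionality; split.
  - intros [x [H1 H2]]. eapply rst_trans; [apply (clos_map Hf); eassumption | exact H2].
  - intros H; exists x0; split; [apply rst_refl | exact H].
Qed.

(* the map induced on classes: [x] |-> [f x] *)
Definition qmap (S : quot R) : quot R' :=
  exist _ (fun y => exists x, proj1_sig S x /\ clos_refl_sym_trans Y R' (f x) y)
        (qmap_ok S).
End QMap.

Definition pullback (X Y : Category) (F : Functor X Y) (psi : Presheaf Y)
  : Presheaf X.
refine {| ps x := psi (F x); psmap x y f a := psmap psi (fmap F f) a |}.
- intros; rewrite fmap_id; apply psmap_id.
- intros; rewrite fmap_comp; apply psmap_comp.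
Defined.

Section Lan.
Variables (X Y : Category) (F : Functor X Y) (chi : Presheaf X).

Definition Elt (y : Y) : Type := {x : X & (hom y (F x) * chi x)%type}.

(* the coend relation:  (g, chi(f) a) ~ (g ; F f, a) *)
Inductive crel (y : Y) : Elt y -> Elt y -> Prop :=
| crel_gen : forall (x x' : X) (f : hom x x') (g : hom y (F x)) (a : chi x'),
    crel (existT _ x (g, psmap chi f a)) (existT _ x' (comp g (fmap F f), a)).

Definition act (y' y : Y) (h : hom y' y) (e : Elt y) : Elt y' :=
  existT _ (projT1 e) (comp h (fst (projT2 e)), snd (projT2 e)).

Lemma act_ok (y' y : Y) (h : hom y' y) (a b : Elt y) :
  crel a b -> clos_refl_sym_trans _ (@crel y') (act h a) (act h b).
Proof.
  destruct 1; unfold act; simpl. rewrite <- comp_assoc. apply rst_step; constructor.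
Qed.

Lemma act_id (y : Y) (e : Elt y) : act (idm y) e = e.
Proof. destruct e as [x [g a]]; unfold act; simpl; rewrite comp_idl; reflexivity. Qed.

Lemma act_comp (y'' y' y : Y) (h : hom y'' y') (h' : hom y' y) (e : Elt y) :
  act (comp h h') e = act h (act h' e).
Proof. destruct e as [x [g a]]; unfold act; simpl; rewrite comp_assoc; reflexivity. Qed.

Definition Lan : Presheaf Y.
refine {| ps y := quot (@crel y);
          psmap y' y h S := qmap (@act_ok y' y h) S |}.
- intros y S; apply sig_ext; destruct S as [S [x0 ->]]; simpl.
  apply functional_extensionality; intro z; apply propositional_extensionality; split.
  + intros [e [H1 H2]]. rewrite act_id in H2. eapply rst_trans; eassumption.
  + intros H; exists z; split; [exact H | rewrite act_id; apply rst_refl].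
- intros y'' y' y h h' S; apply sig_ext; simpl.
  apply functional_extensionality; intro z; apply propositional_extensionality; split.
  + intros [e [H1 H2]]. exists (act h' e); split.
    * exists e; split; [exact H1 | apply rst_refl].
    * rewrite <- act_comp; exact H2.
  + intros [e [[e' [H1 H2]] H3]]. exists e'; split; [exact H1|].
    rewrite act_comp. eapply rst_trans; [apply (clos_map (@act_ok _ _ h)); exact H2 | exact H3].
Defined.
End Lan.

Section Refinement.
Variables (D T : Category) (t : Functor D T).

(* Derivations of  P ==>_c R  (with P [ t P, R [ t R, c : t P -> t R) *)
Definition Der (P R : D) (c : hom (t P) (t R)) : Type :=
  {a : hom P R | fmap t a = c}.

Lemma der_comp_ok (P Q R : D) (c : hom (t P) (t Q)) (d : hom (t Q) (t R))
  (a : Der c) (b : Der d) : fmap t (comp (proj1_sig a) (proj1_sig b)) = comp c d.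
Proof. destruct a as [a Ha], b as [b Hb]; simpl; rewrite fmap_comp, Ha, Hb; reflexivity. Qed.

Definition der_comp (P Q R : D) (c : hom (t P) (t Q)) (d : hom (t Q) (t R))
  (a : Der c) (b : Der d) : Der (comp c d) :=
  exist _ (comp (proj1_sig a) (proj1_sig b)) (der_comp_ok a b).

Definition is_pushforward (P Q : D) (c : hom (t P) (t Q)) (kappa : Der c) : Prop :=
  forall (R : D) (d : hom (t Q) (t R)),
    bijective (fun b : Der d => der_comp kappa b).

Record PObj (B : T) := mkP { pP : D; pc : hom (t pP) B }.
Arguments mkP {B} pP pc.
Arguments pP {B} _.
Arguments pc {B} _.

Definition PHom (B : T) (x y : PObj B) : Type :=
  {a : hom (pP x) (pP y) | pc x = comp (fmap t a) (pc y)}.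

Lemma Plus_id_ok (B : T) (x : PObj B) : pc x = comp (fmap t (idm (pP x))) (pc x).
Proof. rewrite fmap_id, comp_idl; reflexivity. Qed.

Lemma Plus_comp_ok (B : T) (x y z : PObj B) (f : PHom x y) (g : PHom y z) :
  pc x = comp (fmap t (comp (proj1_sig f) (proj1_sig g))) (pc z).
Proof.
  destruct f as [f Hf], g as [g Hg]; simpl.
  rewrite fmap_comp, comp_assoc, <- Hg; exact Hf.
Qed.

Definition Plus (B : T) : Category.
refine {| ob := PObj B; hom := @PHom B;
          idm x := exist _ (idm (pP x)) (Plus_id_ok x);
          comp x y z f g := exist _ (comp (proj1_sig f) (proj1_sig g)) (Plus_comp_ok f g) |}.
- intros; apply sig_ext; simpl; apply comp_idl.
- intros; apply sig_ext; simpl; apply comp_idr.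
- intros; apply sig_ext; simpl; apply comp_assoc.
Defined.

Record MObj (B : T) := mkM { mR : D; md : hom B (t mR) }.
Arguments mkM {B} mR md.
Arguments mR {B} _.
Arguments md {B} _.

Definition MHom (B : T) (x y : MObj B) : Type :=
  {a : hom (mR x) (mR y) | comp (md x) (fmap t a) = md y}.

Lemma M_id_ok (B : T) (x : MObj B) : comp (md x) (fmap t (idm (mR x))) = md x.
Proof. rewrite fmap_id, comp_idr; reflexivity. Qed.

Lemma M_comp_ok (B : T) (x y z : MObj B) (f : MHom x y) (g : MHom y z) :
  comp (md x) (fmap t (comp (proj1_sig f) (proj1_sig g))) = md z.
Proof.
  destruct f as [f Hf], g as [g Hg]; simpl.
  rewrite fmap_comp, <- comp_assoc, Hf; exact Hg.
Qed.

Definition Mcat (B : T) : Category.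
refine {| ob := MObj B; hom := @MHom B;
          idm x := exist _ (idm (mR x)) (M_id_ok x);
          comp x y z f g := exist _ (comp (proj1_sig f) (proj1_sig g)) (M_comp_ok f g) |}.
- intros; apply sig_ext; simpl; apply comp_idl.
- intros; apply sig_ext; simpl; apply comp_idr.
- intros; apply sig_ext; simpl; apply comp_assoc.
Defined.

Definition Minus (B : T) : Category := op (Mcat B).

Record JObj := mkJ { jP : D; jR : D; jc : hom (t jP) (t jR) }.
Arguments mkJ : clear implicits.

Definition JHom (x y : JObj) : Type :=
  {p : (hom (jP x) (jP y) * hom (jR y) (jR x))%type |
     jc x = comp (comp (fmap t (fst p)) (jc y)) (fmap t (snd p))}.

Lemma J_id_ok (x : JObj) :
  jc x = comp (comp (fmap t (fst (idm (jP x), idm (jR x)))) (jc x))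
              (fmap t (snd (idm (jP x), idm (jR x)))).
Proof. simpl; rewrite !fmap_id, comp_idl, comp_idr; reflexivity. Qed.

Lemma J_comp_ok (x y z : JObj) (f : JHom x y) (g : JHom y z) :
  jc x = comp (comp (fmap t (fst (comp (fst (proj1_sig f)) (fst (proj1_sig g)),
                                      comp (snd (proj1_sig g)) (snd (proj1_sig f)))))
                    (jc z))
              (fmap t (snd (comp (fst (proj1_sig f)) (fst (proj1_sig g)),
                                 comp (snd (proj1_sig g)) (snd (proj1_sig f))))).
Proof.
  destruct f as [[f1 f2] Hf], g as [[g1 g2] Hg]; simpl in *.
  rewrite Hf, Hg, !fmap_comp, !comp_assoc; reflexivity.
Qed.

Definition Jdg : Category.
refine {| ob := JObj; hom := JHom;
          idm x := exist _ (idm (jP x), idm (jR x)) (J_id_ok x);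
          comp x y z f g := exist _ (comp (fst (proj1_sig f)) (fst (proj1_sig g)),
                                     comp (snd (proj1_sig g)) (snd (proj1_sig f)))
                                  (J_comp_ok f g) |}.
- intros x y [[f1 f2] Hf]; apply sig_ext; simpl; rewrite comp_idl, comp_idr; reflexivity.
- intros x y [[f1 f2] Hf]; apply sig_ext; simpl; rewrite comp_idl, comp_idr; reflexivity.
- intros x y z w [[f1 f2] Hf] [[g1 g2] Hg] [[h1 h2] Hh]; apply sig_ext; simpl;
  rewrite !comp_assoc; reflexivity.
Defined.

Lemma DerJ_ok (x y : JObj) (f : JHom x y) (a : Der (jc y)) :
  fmap t (comp (comp (fst (proj1_sig f)) (proj1_sig a)) (snd (proj1_sig f))) = jc x.
Proof.
  destruct f as [[f1 f2] Hf], a as [a Ha]; simpl in *.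
  rewrite !fmap_comp, Ha, Hf; reflexivity.
Qed.

Definition DerJ : Presheaf Jdg.
refine {| ps (x : Jdg) := Der (jc x);
          psmap (x y : Jdg) (f : JHom x y) (a : Der (jc y)) := exist _ (comp (comp (fst (proj1_sig f)) (proj1_sig a))
                                         (snd (proj1_sig f))) (DerJ_ok f a) |}.
- intros x [a Ha]; apply sig_ext; simpl; rewrite comp_idl, comp_idr; reflexivity.
- intros x y z [[f1 f2] Hf] [[g1 g2] Hg] [a Ha]; apply sig_ext; simpl;
  rewrite !comp_assoc; reflexivity.
Defined.

Definition bracket_ob (B : T) (x : PObj B) (y : MObj B) : JObj :=
  mkJ (pP x) (mR y) (comp (pc x) (md y)).

Lemma bracket_ok (B : T) (x1 x2 : Plus B) (y1 y2 : Minus B)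
  (f : hom x1 x2) (g : hom y1 y2) :
  jc (bracket_ob x1 y1) =
  comp (comp (fmap t (fst (proj1_sig f, proj1_sig g))) (jc (bracket_ob x2 y2)))
       (fmap t (snd (proj1_sig f, proj1_sig g))).
Proof.
  destruct f as [f Hf], g as [g Hg]; simpl in *.
  rewrite Hf, <- Hg, !comp_assoc; reflexivity.
Qed.

Definition bracket_hom (B : T) (x1 x2 : Plus B) (y1 y2 : Minus B)
  (f : hom x1 x2) (g : hom y1 y2) :
  @hom Jdg (bracket_ob x1 y1) (bracket_ob x2 y2) :=
  exist _ (proj1_sig f, proj1_sig g) (bracket_ok f g).

Definition DerL (B : T) (y : Minus B) : Presheaf (Plus B).
refine {| ps (x : Plus B) := DerJ (bracket_ob x y);
          psmap (x1 x2 : Plus B) (f : hom x1 x2) (a : DerJ (bracket_ob x2 y)) :=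
            psmap DerJ (bracket_hom f (idm y)) a |}.
- intros x [a Ha]; apply sig_ext; simpl; rewrite comp_idl, comp_idr; reflexivity.
- intros x1 x2 x3 f g [a Ha]; apply sig_ext; simpl; rewrite !comp_idr, !comp_assoc;
  reflexivity.
Defined.

Definition DerR (B : T) (x : Plus B) : Presheaf (Minus B).
refine {| ps (y : Minus B) := DerJ (bracket_ob x y);
          psmap (y1 y2 : Minus B) (g : hom y1 y2) (a : DerJ (bracket_ob x y2)) :=
            psmap DerJ (bracket_hom (idm x) g) a |}.
- intros y [a Ha]; apply sig_ext; simpl; rewrite comp_idl, comp_idr; reflexivity.
- intros y1 y2 y3 f g [a Ha]; apply sig_ext; simpl; rewrite !comp_idl, !comp_assoc;
  reflexivity.
Defined.

Lemma DerLR_comm (B : T) (x x' : Plus B) (y1 y2 : Minus B)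
  (f : hom x x') (g : hom y1 y2) (a : DerJ (bracket_ob x' y2)) :
  psmap (DerR x) g (psmap (DerL y2) f a) = psmap (DerL y1) f (psmap (DerR x') g a).
Proof.
  destruct a as [a Ha]; apply sig_ext; simpl.
  rewrite !comp_idl, !comp_idr, !comp_assoc; reflexivity.
Qed.

Definition perpP_nt (B : T) (phi : Presheaf (Plus B)) (y1 y2 : Minus B)
  (g : hom y1 y2) (eta : NatTrans phi (DerL y2)) : NatTrans phi (DerL y1).
refine (@Build_NatTrans (Plus B) phi (DerL y1)
          (fun (x : Plus B) (a : phi x) => psmap (DerR x) g (eta x a)) _).
intros x x' f a. rewrite nt_nat. apply DerLR_comm.
Defined.

(* phi^{perp_B}(y) = Nat(phi, Der(< - | y >_B)) : presheaf on B^- *)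
Definition perpP (B : T) (phi : Presheaf (Plus B)) : Presheaf (Minus B).
refine {| ps (y : Minus B) := NatTrans phi (DerL y);
          psmap (y1 y2 : Minus B) (g : hom y1 y2) (eta : NatTrans phi (DerL y2)) :=
            perpP_nt g eta |}.
- intros y eta; apply nt_ext; intros x a; exact (@psmap_id _ (DerR x) _ (eta x a)).
- intros y1 y2 y3 g g' eta; apply nt_ext; intros x a;
  exact (@psmap_comp _ (DerR x) _ _ _ g g' (eta x a)).
Defined.

Definition perpM_nt (B : T) (psi : Presheaf (Minus B)) (x1 x2 : Plus B)
  (f : hom x1 x2) (eta : NatTrans psi (DerR x2)) : NatTrans psi (DerR x1).
refine (@Build_NatTrans (Minus B) psi (DerR x1)
          (fun (y : Minus B) (a : psi y) => psmap (DerL y) f (eta y a)) _).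
intros y y' g a. rewrite nt_nat. symmetry; apply DerLR_comm.
Defined.

(* {}^{perp_B} psi (x) = Nat(psi, Der(< x | - >_B)) : presheaf on B^+ *)
Definition perpM (B : T) (psi : Presheaf (Minus B)) : Presheaf (Plus B).
refine {| ps (x : Plus B) := NatTrans psi (DerR x);
          psmap (x1 x2 : Plus B) (f : hom x1 x2) (eta : NatTrans psi (DerR x2)) :=
            perpM_nt f eta |}.
- intros x eta; apply nt_ext; intros y a; exact (@psmap_id _ (DerL y) _ (eta y a)).
- intros x1 x2 x3 f f' eta; apply nt_ext; intros y a;
  exact (@psmap_comp _ (DerL y) _ _ _ f f' (eta y a)).
Defined.

Lemma Qplus_ok (Q : D) (x1 x2 : Plus (t Q)) (f : hom x1 x2) (a : Der (pc x2)) :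
  fmap t (comp (proj1_sig f) (proj1_sig a)) = pc x1.
Proof. destruct f as [f Hf], a as [a Ha]; simpl; rewrite fmap_comp, Ha; symmetry; exact Hf. Qed.

Definition Qplus (Q : D) : Presheaf (Plus (t Q)).
refine {| ps (x : Plus (t Q)) := @Der (pP x) Q (pc x);
          psmap (x1 x2 : Plus (t Q)) (f : hom x1 x2) (a : @Der (pP x2) Q (pc x2)) := exist _ (comp (proj1_sig f) (proj1_sig a)) (Qplus_ok f a) |}.
- intros x [a Ha]; apply sig_ext; simpl; apply comp_idl.
- intros x1 x2 x3 f g [a Ha]; apply sig_ext; simpl; apply comp_assoc.
Defined.

Lemma Qminus_ok (Q : D) (y1 y2 : Minus (t Q)) (g : hom y1 y2) (a : Der (md y2)) :
  fmap t (comp (proj1_sig a) (proj1_sig g)) = md y1.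
Proof. destruct g as [g Hg], a as [a Ha]; simpl in *; rewrite fmap_comp, Ha; exact Hg. Qed.

Definition Qminus (Q : D) : Presheaf (Minus (t Q)).
refine {| ps (y : Minus (t Q)) := @Der Q (mR y) (md y);
          psmap (y1 y2 : Minus (t Q)) (g : hom y1 y2) (a : @Der Q (mR y2) (md y2)) := exist _ (comp (proj1_sig a) (proj1_sig g)) (Qminus_ok g a) |}.
- intros y [a Ha]; apply sig_ext; simpl; apply comp_idr.
- intros y1 y2 y3 f g [a Ha]; apply sig_ext; simpl; symmetry; apply comp_assoc.
Defined.

Lemma cplus_ok (A B : T) (c : hom A B) (x y : Plus A) (f : hom x y) :
  comp (pc x) c = comp (fmap t (proj1_sig f)) (comp (pc y) c).
Proof. destruct f as [f Hf]; simpl; rewrite Hf, comp_assoc; reflexivity. Qed.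

Definition cplus (A B : T) (c : hom A B) : Functor (Plus A) (Plus B).
refine (@Build_Functor (Plus A) (Plus B) (fun x : PObj A => mkP (pP x) (comp (pc x) c))
          (fun (x y : Plus A) (f : hom x y) => exist _ (proj1_sig f) (cplus_ok c f)) _ _).
- intros; apply sig_ext; reflexivity.
- intros; apply sig_ext; reflexivity.
Defined.

Lemma cminus_ok (A B : T) (c : hom A B) (x y : Mcat B) (f : hom x y) :
  comp (comp c (md x)) (fmap t (proj1_sig f)) = comp c (md y).
Proof. destruct f as [f Hf]; simpl; rewrite comp_assoc, Hf; reflexivity. Qed.

Definition cminusM (A B : T) (c : hom A B) : Functor (Mcat B) (Mcat A).
refine (@Build_Functor (Mcat B) (Mcat A) (fun y : MObj B => mkM (mR y) (comp c (md y)))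
          (fun (x y : Mcat B) (f : hom x y) => exist _ (proj1_sig f) (cminus_ok c f)) _ _).
- intros; apply sig_ext; reflexivity.
- intros; apply sig_ext; reflexivity.
Defined.

Definition cminus (A B : T) (c : hom A B) : Functor (Minus B) (Minus A) :=
  fop (cminusM c).

End Refinement.

(* The pushforward property says precisely that precomposition with kappa is a
   natural isomorphism Q^- ~= (c^-)^* P^- of presheaves on B^-.  The presheaf
   Q^- is represented by (id, Q), so by Yoneda ^perp(Q^-) ~= Der(<- | (id, Q)>)
   = Q^+, which gives (a).  Dually P^+ is represented by (id, P) on A^+, so
   ((c^+)_! P^+)^perp(y) ~= Nat(P^+, Der(<c^+ - | y>)) ~= Der(<(c, P) | y>)
   = ((c^-)^* P^-)(y); applying ^perp to this isomorphism and composing with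
   (a) gives (b). *)
From Stdlib Require Import FunctionalExtensionality
  PropExtensionality Relations.Relation_Operators ClassicalEpsilon.
Set Implicit Arguments.
Unset Strict Implicit.

Definition nt_comp (C : Category) (F G H : Presheaf C)
  (m : NatTrans F G) (n : NatTrans G H) : NatTrans F H.
refine (@Build_NatTrans C F H (fun x a => n x (m x a)) _).
intros; rewrite !nt_nat; reflexivity.
Defined.

Definition iso_trans (C : Category) (F G H : Presheaf C)
  (I : NatIso F G) (J : NatIso G H) : NatIso F H.
refine (@Build_NatIso C F H (nt_comp (iso_fw I) (iso_fw J))
          (nt_comp (iso_bw J) (iso_bw I)) _ _).
- intros; simpl; rewrite !iso_bw_fw; reflexivity.
- intros; simpl; rewrite !iso_fw_bw; reflexivity.
Defined.

Section BijectiveNatTrans.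
Variables (C : Category) (F G : Presheaf C) (m : NatTrans F G)
  (m_bij : forall x, bijective (m x)).

Definition nt_inv (x : C) : G x -> F x :=
  proj1_sig (constructive_indefinite_description _ (m_bij x)).

Lemma nt_invK (x : C) (a : F x) : nt_inv (m x a) = a.
Proof.
  unfold nt_inv; destruct constructive_indefinite_description as [g [gK Kg]].
  exact (gK a).
Qed.

Lemma nt_inv_K (x : C) (b : G x) : m x (nt_inv b) = b.
Proof.
  unfold nt_inv; destruct constructive_indefinite_description as [g [gK Kg]].
  exact (Kg b).
Qed.

Definition nt_inv_nat : NatTrans G F.
refine (@Build_NatTrans C G F (fun x => @nt_inv x) _).
intros x y f b.
rewrite <- (nt_invK (psmap F f (nt_inv b))), nt_nat, nt_inv_K; reflexivity.
Defined.

Definition natiso_of_bijective : NatIso F G :=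
  @Build_NatIso C F G m nt_inv_nat nt_invK nt_inv_K.
End BijectiveNatTrans.

Section Quotients.
Variables (X : Type) (R : X -> X -> Prop).

Definition qclass (x : X) : quot R :=
  exist _ (clos_refl_sym_trans X R x) (ex_intro _ x eq_refl).

Lemma qclass_eq (a b : X) : R a b -> qclass a = qclass b.
Proof.
  intro H; apply sig_ext, functional_extensionality; intro z;
  apply propositional_extensionality; split; intro K.
  - eapply rst_trans; [apply rst_sym, rst_step, H | exact K].
  - eapply rst_trans; [apply rst_step, H | exact K].
Qed.

Lemma quot_rep (S : quot R) : exists r, S = qclass r.
Proof. destruct S as [S [x0 E]]; exists x0; apply sig_ext; exact E. Qed.

Lemma quot_inhabited (S : quot R) : exists x, proj1_sig S x.
Proof. destruct S as [S [x0 ->]]; exists x0; apply rst_refl. Qed.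

Section Lift.
Variables (Z : Type) (f : X -> Z) (f_resp : forall a b, R a b -> f a = f b).

Definition qlift (S : quot R) : Z :=
  f (proj1_sig (constructive_indefinite_description _ (quot_inhabited S))).

Lemma clos_resp (a b : X) : clos_refl_sym_trans X R a b -> f a = f b.
Proof. induction 1; try congruence; auto. Qed.

Lemma qlift_class (r : X) : qlift (qclass r) = f r.
Proof.
  unfold qlift; destruct constructive_indefinite_description as [r' Hr']; simpl in *.
  symmetry; exact (clos_resp Hr').
Qed.
End Lift.
End Quotients.

Lemma psmap_Lan_class (X Y : Category) (F : Functor X Y) (chi : Presheaf X)
  (y' y : Y) (h : hom y' y) (e : Elt F chi y) :
  psmap (Lan F chi) h (qclass (@crel X Y F chi y) e)
  = qclass (@crel X Y F chi y') (act h e).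
Proof.
  apply sig_ext, functional_extensionality; intro z;
  apply propositional_extensionality; split.
  - intros [x [H1 H2]].
    eapply rst_trans; [apply (clos_map (@act_ok _ _ F chi _ _ h)); exact H1 | exact H2].
  - intro H; exists e; split; [apply rst_refl | exact H].
Qed.

Section RefinementSystem.
Variables (D T : Category) (t : Functor D T).

Definition perpM_map (B : T) (psi psi' : Presheaf (Minus t B)) (m : NatTrans psi psi') :
  NatTrans (perpM psi') (perpM psi).
refine (@Build_NatTrans _ (perpM psi') (perpM psi) (fun x eta => nt_comp m eta) _).
intros; apply nt_ext; reflexivity.
Defined.

Definition perpM_iso (B : T) (psi psi' : Presheaf (Minus t B)) (I : NatIso psi psi') :
  NatIso (perpM psi) (perpM psi').
refine (@Build_NatIso _ _ _ (perpM_map (iso_bw I)) (perpM_map (iso_fw I)) _ _).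
- intros x eta; apply nt_ext; intros y a; simpl; rewrite iso_bw_fw; reflexivity.
- intros x eta; apply nt_ext; intros y a; simpl; rewrite iso_fw_bw; reflexivity.
Defined.

Section QminusRepresentable.
Variable Q : D.

Definition unit_minus : Minus t (t Q) := @mkM D T t (t Q) Q (idm (t Q)).

Definition id_minus : Qminus t Q unit_minus := exist _ (idm Q) (fmap_id t Q).

Definition Qplus_to_perp_nt (x : Plus t (t Q)) (al : Qplus t Q x) :
  NatTrans (Qminus t Q) (DerR x).
refine (@Build_NatTrans _ (Qminus t Q) (DerR x) (fun y b => der_comp al b) _).
intros y1 y2 g b; apply sig_ext; simpl; rewrite comp_idl; symmetry; apply comp_assoc.
Defined.

Definition Qplus_to_perp : NatTrans (Qplus t Q) (perpM (Qminus t Q)).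
refine (@Build_NatTrans _ (Qplus t Q) (perpM (Qminus t Q)) Qplus_to_perp_nt _).
intros x1 x2 f al; apply nt_ext; intros y b; apply sig_ext; simpl.
rewrite comp_idr; apply comp_assoc.
Defined.

Lemma eval_unit_ok (x : Plus t (t Q)) (eta : perpM (Qminus t Q) x) :
  fmap t (proj1_sig (eta unit_minus id_minus)) = pc x.
Proof. rewrite (proj2_sig (eta unit_minus id_minus)); apply comp_idr. Qed.

Definition perp_to_Qplus : NatTrans (perpM (Qminus t Q)) (Qplus t Q).
refine (@Build_NatTrans _ (perpM (Qminus t Q)) (Qplus t Q)
          (fun x eta => exist _ (proj1_sig (eta unit_minus id_minus)) (eval_unit_ok eta)) _).
intros x1 x2 f eta; apply sig_ext; simpl; rewrite comp_idr; reflexivity.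
Defined.

(* A derivation [b : Q ==>_d R] is itself a morphism [(d, R) -> (id, Q)] of B^-;
   it transports [id_minus] to [b], which is the Yoneda argument. *)
Definition der_as_minus_hom (y : Minus t (t Q)) (b : Qminus t Q y) :
  hom y unit_minus.
refine (exist _ (proj1_sig b) _).
simpl; rewrite comp_idl; exact (proj2_sig b).
Defined.

Definition Qplus_perp_Qminus_iso : NatIso (Qplus t Q) (perpM (Qminus t Q)).
refine (@Build_NatIso _ _ _ Qplus_to_perp perp_to_Qplus _ _).
- intros x al; apply sig_ext; apply comp_idr.
- intros x eta; apply nt_ext; intros y b; apply sig_ext.
  assert (E : psmap (Qminus t Q) (der_as_minus_hom b) id_minus = b)
    by (apply sig_ext; apply comp_idl).
  rewrite <- E at 2; rewrite (nt_nat eta); simpl; rewrite comp_idl; reflexivity.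
Defined.
End QminusRepresentable.

Section LanDual.
Variables (P : D) (B : T) (c : hom (t P) B).

Let LanP : Presheaf (Plus t B) := Lan (cplus t c) (Qplus t P).
Let psiP : Presheaf (Minus t B) := pullback (cminus t c) (Qminus t P).

Definition unit_plus : Plus t (t P) := @mkP D T t (t P) P (idm (t P)).

Definition id_plus : Qplus t P unit_plus := exist _ (idm P) (fmap_id t P).

Definition unit_Lan : LanP (cplus t c unit_plus) :=
  qclass (@crel _ _ (cplus t c) (Qplus t P) _) (existT _ unit_plus (idm _, id_plus)).

Lemma pair_Lan_ok (y : Minus t B) (b : psiP y) (x : Plus t B)
  (e : Elt (cplus t c) (Qplus t P) x) :
  fmap t (comp (comp (proj1_sig (fst (projT2 e))) (proj1_sig (snd (projT2 e))))
               (proj1_sig b)) = comp (pc x) (md y).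
Proof.
  destruct e as [x' [[f Hf] [a Ha]]]; destruct b as [b Hb]; simpl in *.
  rewrite !fmap_comp, Ha, Hb, Hf; simpl; rewrite !comp_assoc; reflexivity.
Qed.

Definition pair_Lan (y : Minus t B) (b : psiP y) (x : Plus t B)
  (e : Elt (cplus t c) (Qplus t P) x) : DerL y x :=
  exist _ _ (pair_Lan_ok b e).

Lemma pair_Lan_resp (y : Minus t B) (b : psiP y) (x : Plus t B)
  (e1 e2 : Elt (cplus t c) (Qplus t P) x) : crel e1 e2 -> pair_Lan b e1 = pair_Lan b e2.
Proof. destruct 1; apply sig_ext; simpl; rewrite !comp_assoc; reflexivity. Qed.

Definition pair_Lan_class (y : Minus t B) (b : psiP y) (x : Plus t B) (S : LanP x) :
  DerL y x := qlift (pair_Lan b (x:=x)) S.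

Lemma pair_Lan_class_qclass (y : Minus t B) (b : psiP y) (x : Plus t B)
  (e : Elt (cplus t c) (Qplus t P) x) :
  pair_Lan_class b (qclass (@crel _ _ (cplus t c) (Qplus t P) x) e) = pair_Lan b e.
Proof. exact (qlift_class (@pair_Lan_resp y b x) e). Qed.

Definition pullback_to_perp_nt (y : Minus t B) (b : psiP y) : NatTrans LanP (DerL y).
refine (@Build_NatTrans _ LanP (DerL y) (@pair_Lan_class y b) _).
intros x1 x2 h S; destruct (quot_rep S) as [r ->].
unfold LanP; rewrite psmap_Lan_class, !pair_Lan_class_qclass.
apply sig_ext; simpl; rewrite comp_idr, !comp_assoc; reflexivity.
Defined.

Definition pullback_to_perp : NatTrans psiP (perpP LanP).
refine (@Build_NatTrans _ psiP (perpP LanP) pullback_to_perp_nt _).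
intros y1 y2 g b; apply nt_ext; intros x S; destruct (quot_rep S) as [r ->].
cbn -[pair_Lan_class]; rewrite !pair_Lan_class_qclass; apply sig_ext; simpl.
rewrite comp_idl, !comp_assoc; reflexivity.
Defined.

Lemma eval_unit_Lan_ok (y : Minus t B) (eta : perpP LanP y) :
  fmap t (proj1_sig (eta _ unit_Lan)) = comp c (md y).
Proof. rewrite (proj2_sig (eta _ unit_Lan)); simpl; rewrite comp_idl; reflexivity. Qed.

Definition perp_to_pullback : NatTrans (perpP LanP) psiP.
refine (@Build_NatTrans _ (perpP LanP) psiP
          (fun y eta => exist _ (proj1_sig (eta _ unit_Lan)) (eval_unit_Lan_ok eta)) _).
intros y1 y2 g eta; apply sig_ext; simpl; rewrite comp_idl; reflexivity.
Defined.

(* Every class [(f, a)] is the image of [unit_Lan] under [f ; c^+(a)]. *)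
Lemma Lan_class_from_unit (x : Plus t B) (x' : Plus t (t P))
  (f : hom x (cplus t c x')) (a : Qplus t P x') :
  exists h : hom x (cplus t c unit_plus),
    qclass (@crel _ _ (cplus t c) (Qplus t P) x) (existT _ x' (f, a))
    = psmap LanP h unit_Lan.
Proof.
  assert (Ha : pc x' = comp (fmap t (proj1_sig a)) (pc unit_plus)).
  { simpl; rewrite comp_idr; symmetry; exact (proj2_sig a). }
  pose (ah := exist _ (proj1_sig a) Ha : @hom (Plus t (t P)) x' unit_plus).
  exists (comp f (fmap (cplus t c) ah)).
  assert (E : psmap (Qplus t P) ah id_plus = a) by (apply sig_ext; apply comp_idr).
  unfold unit_Lan, LanP; rewrite psmap_Lan_class, <- E.
  etransitivity; [apply qclass_eq, (crel_gen ah f id_plus)|].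
  unfold act; simpl; do 3 f_equal; apply sig_ext; simpl; rewrite comp_idr; reflexivity.
Qed.

Definition pullback_perp_Lan_iso : NatIso psiP (perpP LanP).
refine (@Build_NatIso _ _ _ pullback_to_perp perp_to_pullback _ _).
- intros y b; apply sig_ext; cbn -[pair_Lan_class]; unfold unit_Lan.
  rewrite pair_Lan_class_qclass; simpl; rewrite !comp_idl; reflexivity.
- intros y eta; apply nt_ext; intros x S; destruct (quot_rep S) as [[x' [f a]] ->].
  destruct (Lan_class_from_unit f a) as [h ->].
  rewrite (nt_nat (eta : NatTrans LanP (DerL y))), nt_nat; f_equal.
  apply sig_ext; cbn -[pair_Lan_class]; unfold unit_Lan.
  rewrite pair_Lan_class_qclass; simpl; rewrite !comp_idl; reflexivity.
Defined.
End LanDual.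

Section Pushforward.
Variables (P Q : D) (c : hom (t P) (t Q)) (kappa : @Der D T t P Q c)
  (kappa_push : is_pushforward kappa).

Definition precomp_pushforward :
  NatTrans (Qminus t Q) (pullback (cminus t c) (Qminus t P)).
refine (@Build_NatTrans _ (Qminus t Q) (pullback (cminus t c) (Qminus t P))
          (fun y b => der_comp kappa b) _).
intros y1 y2 g b; apply sig_ext; symmetry; apply comp_assoc.
Defined.

Definition pushforward_Qminus_iso :
  NatIso (Qminus t Q) (pullback (cminus t c) (Qminus t P)) :=
  @natiso_of_bijective _ _ _ precomp_pushforward
    (fun y : Minus t (t Q) => kappa_push (md y)).
End Pushforward.
End RefinementSystem.

Theorem proposition4p13 (D T : Category) (t : Functor D T) (P Q : D)
  (c : hom (t P) (t Q)) (kappa : @Der D T t P Q c)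
  (Hpush : is_pushforward kappa) :
  inhabited (NatIso (Qplus t Q) (perpM (pullback (cminus t c) (Qminus t P))))
  /\
  inhabited (NatIso (Qplus t Q) (perpM (perpP (Lan (cplus t c) (Qplus t P))))).
Proof.
  pose (iso_a := iso_trans (Qplus_perp_Qminus_iso t Q)
                           (perpM_iso (pushforward_Qminus_iso Hpush))).
  split; constructor.
  - exact iso_a.
  - exact (iso_trans iso_a (perpM_iso (pullback_perp_Lan_iso c))).
Qed.
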